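(* Let $j_1,j_2,j_3$ be distinct constants and use cyclic triples $(\alpha,\beta,\gamma)$ of $(1,2,3)$. On $M$ with coordinates $(S_\alpha,T_\alpha)$ let $P_0=\sum_\alpha S_\alpha\,\partial_{T_\beta}\wedge\partial_{T_\gamma}$, $P_\alpha=S_\alpha\,\partial_{S_\beta}\wedge\partial_{S_\gamma}+(T_\beta\partial_{S_\gamma}-T_\gamma\partial_{S_\beta})\wedge\partial_{T_\alpha}$, $P=P_1+P_2+P_3$, $Q=P_0+j_1P_1+j_2P_2+j_3P_3$. Let $\hat M=M\times\mathcal E$, $\mathcal E$ a curve with local parameter $\zeta$, let $A_\alpha(\zeta),B_\alpha(\zeta)$, $v(\zeta)$ be functions on $\mathcal E$, $\hat C_2=\sum_\alpha(B_\alpha S_\alpha+A_\alpha T_\alpha)$, $\hat P,\hat Q$ the lifts of $P,Q$ to $\hat M$ determined by $\hat C_2$, $\hat Z=\sum_\alpha A_\alpha\partial_{S_\alpha}+B_\alpha\partial_{T_\alpha}$, $\hat{\mathcal S}=\{\hat C_2=0\}$. Assume the seven functions $A_\alpha,B_\alpha,v$ satisfy the ten algebraic constraints (for all cyclic $(\alpha,\beta,\gamma)$) \[ A_\alpha^2+(v+j_\beta)B_\gamma^2+(v+j_\gamma)B_\beta^2=0,\quad (v+j_\alpha)A_\alpha B_\beta-(v+j_\beta)A_\beta B_\alpha=0, \] \[ A_\alpha A_\beta-(v+j_\gamma)B_\alpha B_\beta=0,\quad \sum_{\alpha=1}^3(v+j_\alpha)A_\alpha^2=0 . \] Then the 3-vector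 $\hat Z\wedge d_{(\hat Q+v(\zeta)\hat P)}\hat Z$ vanishes on $\hat{\mathcal S}$.
   Context: The lift $\hat R$ (for $R=P$ or $R=Q$) is the bivector on $\hat M$ (coordinates $(S_\alpha,T_\alpha,\zeta)$, assuming $\partial\hat C_2/\partial\zeta\ne0$) whose brackets among the $S_\alpha,T_\alpha$ are those of $R$ and with $\{S_\alpha,\zeta\}_{\hat R}=-\big(\sum_\beta \tfrac{\partial\hat C_2}{\partial S_\beta}\{S_\alpha,S_\beta\}_R+\tfrac{\partial\hat C_2}{\partial T_\beta}\{S_\alpha,T_\beta\}_R\big)\big(\tfrac{\partial\hat C_2}{\partial\zeta}\big)^{-1}$, and $\{T_\alpha,\zeta\}_{\hat R}$ given by the same formula with $S_\alpha$ replaced by $T_\alpha$ in the first slot. For a bivector $R$, $d_R=[R,\cdot\,]_{Sch}$ (Schouten bracket). *)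

From HB Require Import structures.
From mathcomp Require Import all_boot all_order all_algebra.
From mathcomp Require Import all_classical all_reals all_analysis.
Set Implicit Arguments. Unset Strict Implicit. Unset Printing Implicit Defensive.
Import Order.TTheory GRing.Theory Num.Theory.
Import numFieldNormedType.Exports.
Local Open Scope ring_scope.

(* Coordinates on \hat M = M x E :
   index 0,1,2 = S_1,S_2,S_3 ; 3,4,5 = T_1,T_2,T_3 ; 6 = zeta.
   A point is a function 'I_7 -> K. *)
Section Defs.
Variable K : numFieldType.

Definition pt := 'I_7 -> K.
Definition fn := pt -> K.
Definition vfield := 'I_7 -> fn.
Definition bivector := 'I_7 -> 'I_7 -> fn.  (* components R^{ij} = {x_i,x_j} *)
Definition trivector := 'I_7 -> 'I_7 -> 'I_7 -> fn.

Definition iS (a : 'I_3) : 'I_7 := inord a.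
Definition iT (a : 'I_3) : 'I_7 := inord (3 + a).
Definition iz : 'I_7 := inord 6.

(* cyclic successor: (alpha, beta, gamma) = (a, nx a, nx (nx a)) *)
Definition nx (a : 'I_3) : 'I_3 := ordS a.

Definition pd (i : 'I_7) (F : fn) (x : pt) : K :=
  derive1 (fun t : K => F (fun l => if l == i then x l + t else x l)) 0.

Definition ewedge (a b : 'I_7) : bivector :=
  fun k l _ => ((k == a) && (l == b))%:R - ((k == b) && (l == a))%:R.

Definition bv_add (R1 R2 : bivector) : bivector := fun i j x => R1 i j x + R2 i j x.
Definition bv_scale (f : fn) (R : bivector) : bivector := fun i j x => f x * R i j x.

Definition Palpha (a : 'I_3) : bivector :=
  let b := nx a in let c := nx (nx a) in
  bv_add (bv_scale (fun x => x (iS a)) (ewedge (iS b) (iS c)))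
   (bv_add (bv_scale (fun x => x (iT b)) (ewedge (iS c) (iT a)))
           (bv_scale (fun x => - x (iT c)) (ewedge (iS b) (iT a)))).

Definition P0 : bivector := fun i j x =>
  \sum_(a < 3) x (iS a) * ewedge (iT (nx a)) (iT (nx (nx a))) i j x.

Definition Pbv : bivector := fun i j x => \sum_(a < 3) Palpha a i j x.

Definition Qbv (jc : 'I_3 -> K) : bivector := fun i j x =>
  P0 i j x + \sum_(a < 3) jc a * Palpha a i j x.

Definition liftcol (C : fn) (R : bivector) (i : 'I_7) : fn := fun x =>
  - (\sum_(k < 7 | k != iz) pd k C x * R i k x) / pd iz C x.

Definition liftbv (C : fn) (R : bivector) : bivector := fun i j x =>
  if i == iz then (if j == iz then 0 else - liftcol C R j x)
  else if j == iz then liftcol C R i x else R i j x.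

Definition lie (X : vfield) (R : bivector) : bivector := fun i j x =>
  \sum_(k < 7) X k x * pd k (R i j) x
  - \sum_(k < 7) R k j x * pd k (X i) x
  - \sum_(k < 7) R i k x * pd k (X j) x.

(* d_R X = [R, X]_Sch = - L_X R  for a bivector R and a vector field X *)
Definition dR (R : bivector) (X : vfield) : bivector := fun i j x => - lie X R i j x.

Definition wedge12 (X : vfield) (W : bivector) : trivector := fun i j k x =>
  X i x * W j k x + X j x * W k i x + X k x * W i j x.

Definition C2hat (A B : 'I_3 -> K -> K) : fn := fun x =>
  \sum_(a < 3) (B a (x iz) * x (iS a) + A a (x iz) * x (iT a)).

Definition Zhat (A B : 'I_3 -> K -> K) : vfield := fun i x =>
  \sum_(a < 3) ((i == iS a)%:R * A a (x iz) + (i == iT a)%:R * B a (x iz)).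

End Defs.

From HB Require Import structures.
From mathcomp Require Import all_boot all_order all_algebra.
From mathcomp Require Import all_classical all_reals all_analysis.
From mathcomp Require Import ring.
Set Implicit Arguments. Unset Strict Implicit. Unset Printing Implicit Defensive.
Import Order.TTheory GRing.Theory Num.Theory.
Import numFieldNormedType.Exports.
Local Open Scope ring_scope.

(** Freeze zeta = z.  Then \hat C_2 is the linear form [C_at] on M, \hat Z is
   the constant vector [zpoint], and Q + vP is the linear bivector
   [pencil w] = P_0 + sum_a w_a P_a with w_a = v(z) + j_a.  In the coordinates
   (S, T, zeta) the lift R of Q + vP has this linear block on M and zeta-row
   X / c, where X = [ham] is the Hamiltonian vector field of \hat C_2 for
   [pencil w] and c = d\hat C_2/d zeta; along M both are linear in the point.
   Since \hat Z has no zeta-component and depends on zeta only, L_Z R is got by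
   differentiating these linear and rational entries along Z, plus two terms
   carrying dZ/d zeta.  Hence Z /\ L_Z R = 0 on \hat S reduces to two algebraic
   facts: Z /\ pencil(Z) = 0, and X(y) is parallel to Z whenever \hat C_2(y) = 0,
   used at y = x and at y = Z (where \hat C_2(Z) = 2 A.B = 0).  Both are
   ideal-membership statements for the ten constraints; by antisymmetry and the
   cyclic symmetry only eight, resp. five, cases remain, each closed by an
   explicit certificate. *)

Lemma nx3 (a : 'I_3) : nx (nx (nx a)) = a.
Proof. by apply: val_inj; case: a => [[|[|[|]]] ?]. Qed.

Lemma nx_eqF (a : 'I_3) :
  ((a == nx a) = false) * ((nx a == a) = false) * ((a == nx (nx a)) = false) *
  ((nx (nx a) == a) = false) * ((nx a == nx (nx a)) = false) *
  ((nx (nx a) == nx a) = false).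
Proof. by case: a => [[|[|[|]]] ?]. Qed.

Variant cyc_spec (a : 'I_3) : 'I_3 -> Type :=
  | CycSame : cyc_spec a a
  | CycNext : cyc_spec a (nx a)
  | CycPrev : cyc_spec a (nx (nx a)).

Lemma cycP (a b : 'I_3) : cyc_spec a b.
Proof.
have [<-|ab] := eqVneq a b; first exact: CycSame.
have [<-|nab] := eqVneq (nx a) b; first exact: CycNext.
suff <- : nx (nx a) = b by exact: CycPrev.
apply/val_inj; move: ab nab.
by case: a => [[|[|[|]]] ?] //; case: b => [[|[|[|]]] ?].
Qed.

Lemma sum_cyclic {V : nmodType} (a : 'I_3) (F : 'I_3 -> V) :
  \sum_(b < 3) F b = F a + F (nx a) + F (nx (nx a)).
Proof.
rewrite (bigD1 a) // (bigD1 (nx a)) ?nx_eqF //= (bigD1 (nx (nx a))) ?nx_eqF //=.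
rewrite big1 ?addr0 ?addrA // => b; case: (cycP a b); rewrite ?eqxx ?andbF //.
Qed.

Lemma val_iS (a : 'I_3) : val (iS a) = a.
Proof. by rewrite /iS /= inordK // (leq_trans (ltn_ord a)). Qed.

Lemma val_iT (a : 'I_3) : val (iT a) = (3 + a)%N.
Proof. by rewrite /iT /= inordK // -[7%N]/(3 + 4)%N ltn_add2l (leq_trans (ltn_ord a)). Qed.

Lemma val_iz : val iz = 6%N.
Proof. by rewrite /iz /= inordK. Qed.

Lemma coord_eqE :
  (forall a b, (iS a == iS b) = (a == b)) * (forall a b, (iT a == iT b) = (a == b)) *
  (forall a b, (iS a == iT b) = false) * (forall a b, (iT a == iS b) = false) *
  (forall a, (iS a == iz) = false) * (forall a, (iT a == iz) = false) *
  (forall a, (iz == iS a) = false) * (forall a, (iz == iT a) = false).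
Proof.
have lt3 (c : 'I_3) : (c < 3)%N := ltn_ord c.
do !split=> *; rewrite -val_eqE /= ?val_iS ?val_iT ?val_iz ?eqn_add2l //;
  apply/negbTE; rewrite ?neq_ltn ?(leq_trans (lt3 _)) ?leq_addr ?orbT //.
all: by rewrite -[6%N]/(3 + 3)%N !ltn_add2l ltn_ord ?orbT.
Qed.

Variant coord_spec : 'I_7 -> Type :=
  | CoordS a : coord_spec (iS a)
  | CoordT a : coord_spec (iT a)
  | CoordZ : coord_spec iz.

Lemma coordP (i : 'I_7) : coord_spec i.
Proof.
case: i => n lt7.
have [n3|n3] := ltnP n 3.
  rewrite (_ : Ordinal lt7 = iS (Ordinal n3)); first exact: CoordS.
  by apply: val_inj; rewrite val_iS.
have [n6|n6] := ltnP n 6.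
  have m3 : (n - 3 < 3)%N by rewrite ltn_subLR.
  rewrite (_ : Ordinal lt7 = iT (Ordinal m3)); first exact: CoordT.
  by apply: val_inj; rewrite val_iT /= subnKC.
rewrite (_ : Ordinal lt7 = iz); first exact: CoordZ.
by apply: val_inj; rewrite val_iz /=; apply/eqP; rewrite eqn_leq n6 -ltnS lt7.
Qed.

Lemma sum_coords_nz {V : nmodType} (F : 'I_7 -> V) :
  \sum_(k < 7 | k != iz) F k = \sum_(a < 3) (F (iS a) + F (iT a)).
Proof.
set a : 'I_3 := ord0; rewrite (sum_cyclic a).
rewrite (bigD1 (iS a)) ?coord_eqE // (bigD1 (iT a)) ?coord_eqE //.
rewrite (bigD1 (iS (nx a))) ?coord_eqE ?nx_eqF // (bigD1 (iT (nx a))) ?coord_eqE ?nx_eqF //.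
rewrite (bigD1 (iS (nx (nx a)))) ?coord_eqE ?nx_eqF //.
rewrite (bigD1 (iT (nx (nx a)))) ?coord_eqE ?nx_eqF //.
rewrite big1 /= ?addr0 ?addrA // => k.
by case: (coordP k) => [b|b|]; rewrite ?eqxx //; case: (cycP a b); rewrite !coord_eqE ?eqxx ?andbF.
Qed.

Section Wedges.
Variable K : numFieldType.

Lemma alt2_cyclic_eq0 (g : 'I_3 -> 'I_3 -> K) :
  (forall a b, g b a = - g a b) -> (forall a, g a (nx a) = 0) ->
  forall a b, g a b = 0.
Proof.
move=> gN g0 a b; case: (cycP a b); first by apply/eqP; rewrite -eqNr {1}gN opprK.
  exact: g0.
by rewrite gN -[X in g _ X]nx3 g0 oppr0.
Qed.

Lemma alt3_cyclic_eq0 (g : 'I_3 -> 'I_3 -> 'I_3 -> K) :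
  (forall a b c, g b a c = - g a b c) -> (forall a b c, g b c a = g a b c) ->
  (forall a, g a (nx a) (nx (nx a)) = 0) ->
  forall a b c, g a b c = 0.
Proof.
move=> gN gC g0 a b c.
apply: (alt2_cyclic_eq0 (g := fun a b => g a b c)) => [{}a {}b|{}a]; first exact: gN.
have gdiag d e : g d d e = 0 by apply/eqP; rewrite -eqNr {1}gN opprK.
case: (cycP a c); last exact: g0.
  by rewrite gC gdiag.
by rewrite -gC gdiag.
Qed.

Definition wedge3 (X : 'I_7 -> K) (W : 'I_7 -> 'I_7 -> K) i j k :=
  X i * W j k + X j * W k i + X k * W i j.

Definition parallel (X Y : 'I_7 -> K) :=
  forall i j, i != iz -> j != iz -> X i * Y j = X j * Y i.

Lemma wedge3_cyclic_eq0 X W : (forall i j, W j i = - W i j) ->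
  (forall a, wedge3 X W (iS a) (iS (nx a)) (iS (nx (nx a))) = 0) ->
  (forall a, wedge3 X W (iT a) (iT (nx a)) (iT (nx (nx a))) = 0) ->
  (forall a k, wedge3 X W (iS a) (iS (nx a)) (iT k) = 0) ->
  (forall a k, wedge3 X W (iS k) (iT a) (iT (nx a)) = 0) ->
  forall i j k, i != iz -> j != iz -> k != iz -> wedge3 X W i j k = 0.
Proof.
move=> WN SSS TTT SST STT.
have fC i j k : wedge3 X W j k i = wedge3 X W i j k by rewrite /wedge3; ring.
have fN i j k : wedge3 X W j i k = - wedge3 X W i j k.
  by rewrite /wedge3 (WN j k) (WN k i) (WN i j); ring.
have fN' i j k : wedge3 X W i k j = - wedge3 X W i j k by rewrite -fC fN fC.
have {}SSS := alt3_cyclic_eq0 (g := fun a b c => wedge3 X W (iS a) (iS b) (iS c))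
  (fun a b c => fN _ _ _) (fun a b c => fC _ _ _) SSS.
have {}TTT := alt3_cyclic_eq0 (g := fun a b c => wedge3 X W (iT a) (iT b) (iT c))
  (fun a b c => fN _ _ _) (fun a b c => fC _ _ _) TTT.
have {}SST a b k := alt2_cyclic_eq0 (g := fun a b => wedge3 X W (iS a) (iS b) (iT k))
  (fun a b => fN _ _ _) (SST ^~ k) a b.
have {}STT k a b := alt2_cyclic_eq0 (g := fun a b => wedge3 X W (iS k) (iT a) (iT b))
  (fun a b => fN' _ _ _) (STT ^~ k) a b.
move=> i j k.
case: (coordP i) => [a|a|]; case: (coordP j) => [b|b|]; case: (coordP k) => [c|c|];
  rewrite ?eqxx // => _ _ _.
- by rewrite fC SST.
- by rewrite -fC SST.
- by rewrite fN STT oppr0.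
- by rewrite fC STT.
Qed.

Lemma parallel_cyclic X Y :
  (forall a, X (iS a) * Y (iS (nx a)) = X (iS (nx a)) * Y (iS a)) ->
  (forall a, X (iT a) * Y (iT (nx a)) = X (iT (nx a)) * Y (iT a)) ->
  (forall a k, X (iS a) * Y (iT k) = X (iT k) * Y (iS a)) ->
  parallel X Y.
Proof.
move=> SS TT ST i j hi hj.
pose g k l := X k * Y l - X l * Y k.
have gN k l : g l k = - g k l by rewrite /g opprB.
have {}SS := alt2_cyclic_eq0 (g := fun a b => g (iS a) (iS b)) (fun _ _ => gN _ _)
  (fun a => etrans (congr1 (fun u => u - _) (SS a)) (subrr _)).
have {}TT := alt2_cyclic_eq0 (g := fun a b => g (iT a) (iT b)) (fun _ _ => gN _ _)
  (fun a => etrans (congr1 (fun u => u - _) (TT a)) (subrr _)).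
suff : g i j = 0 by move/subr0_eq.
case: (coordP i) hi => [a|a|]; case: (coordP j) hj => [b|b|]; rewrite ?eqxx // => _ _.
- by rewrite /g ST subrr.
- by rewrite gN /g ST subrr oppr0.
Qed.

Definition lift_at (W : 'I_7 -> 'I_7 -> K) (u : 'I_7 -> K) i j :=
  if i == iz then (if j == iz then 0 else u j)
  else if j == iz then - u i else W i j.

(* The bivector below is L_X R for R = [lift_at Wx u]: [du] is the derivative of
   the zeta-row [u] along X, and [dX] is the zeta-derivative of X. *)
Lemma wedge3_lift_eq0 (X dX hx hX : 'I_7 -> K) (W Wx : 'I_7 -> 'I_7 -> K) (c cX : K) :
  X iz = 0 -> dX iz = 0 ->
  (forall i j k, i != iz -> j != iz -> k != iz -> wedge3 X W i j k = 0) ->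
  parallel X hx -> parallel X hX ->
  let u i := hx i / c in let du i := (hX i * c - hx i * cX) / c ^+ 2 in
  forall i j k, wedge3 X (fun i j =>
    lift_at W du i j - lift_at Wx u iz j * dX i - lift_at Wx u i iz * dX j) i j k = 0.
Proof.
move=> Xz dXz XW Phx PhX u du i j k.
have Xdu p q : p != iz -> q != iz -> X p * - du q + X q * du p = 0.
  move=> pz qz; transitivity
    ((c * (X q * hX p - X p * hX q) - cX * (X q * hx p - X p * hx q)) / c ^+ 2).
    by rewrite /du; ring.
  by rewrite (PhX q p) // (Phx q p) // !subrr; ring.
rewrite /wedge3 /lift_at /u.
have [->|iz'] := eqVneq i iz; have [->|jz'] := eqVneq j iz; have [->|kz'] := eqVneq k iz;
  rewrite ?eqxx ?(negPf iz') ?(negPf jz') ?(negPf kz') ?Xz ?dXz; try ring.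
- by rewrite -[RHS](Xdu j k) //; ring.
- by rewrite -[RHS](Xdu k i) //; ring.
- by rewrite -[RHS](Xdu i j) //; ring.
- transitivity (wedge3 X W i j k + c^-1 * (dX j * (X k * hx i - X i * hx k)
    + dX k * (X i * hx j - X j * hx i) + dX i * (X j * hx k - X k * hx j))).
    by rewrite /wedge3; ring.
  by rewrite XW // (Phx k i) // (Phx i j) // (Phx j k) // !subrr; ring.
Qed.

End Wedges.

Section Pencil.
Variables (K : numFieldType) (w A B : 'I_3 -> K).

Definition pencil : bivector K := fun i j y =>
  P0 i j y + \sum_(a < 3) w a * Palpha a i j y.

(* After every sum over ['I_3] is expanded from base [a], all indices are among
   [a], [nx a], [nx (nx a)], so the coordinate tests in the entries evaluate. *)
Ltac pencil_simpl a :=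
  rewrite /pencil /P0 /Palpha /bv_add /bv_scale /ewedge !(sum_cyclic a) ?nx3
    ?coord_eqE ?nx_eqF ?eqxx /=.

Definition ham (i : 'I_7) (y : pt K) : K :=
  \sum_(a < 3) (B a * pencil i (iS a) y + A a * pencil i (iT a) y).

Lemma ham_S a y :
  ham (iS a) y =
    w (nx (nx a)) * B (nx a) * y (iS (nx (nx a)))
    - w (nx a) * B (nx (nx a)) * y (iS (nx a))
    + w (nx a) * A (nx a) * y (iT (nx (nx a)))
    - w (nx (nx a)) * A (nx (nx a)) * y (iT (nx a)).
Proof. by rewrite /ham; pencil_simpl a; ring. Qed.

Lemma ham_T a y :
  ham (iT a) y =
    w a * (B (nx a) * y (iT (nx (nx a))) - B (nx (nx a)) * y (iT (nx a)))
    + A (nx a) * y (iS (nx (nx a))) - A (nx (nx a)) * y (iS (nx a)).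
Proof. by rewrite /ham; pencil_simpl a; ring. Qed.

Definition sq_rel a :=
  A a ^+ 2 + w (nx a) * B (nx (nx a)) ^+ 2 + w (nx (nx a)) * B (nx a) ^+ 2.
Definition mix_rel a := w a * A a * B (nx a) - w (nx a) * A (nx a) * B a.
Definition prod_rel a := A a * A (nx a) - w (nx (nx a)) * B a * B (nx a).

Definition curve_constraints : Prop :=
  (forall a, [/\ sq_rel a = 0, mix_rel a = 0 & prod_rel a = 0]) /\
  \sum_(a < 3) w a * A a ^+ 2 = 0.

Definition zpoint : pt K := fun i =>
  \sum_(a < 3) ((i == iS a)%:R * A a + (i == iT a)%:R * B a).

Definition C_at (y : pt K) := \sum_(a < 3) (B a * y (iS a) + A a * y (iT a)).

Lemma zpoint_S a : zpoint (iS a) = A a.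
Proof. by rewrite /zpoint (sum_cyclic a) !coord_eqE ?nx_eqF eqxx /=; ring. Qed.

Lemma zpoint_T a : zpoint (iT a) = B a.
Proof. by rewrite /zpoint (sum_cyclic a) !coord_eqE ?nx_eqF eqxx /=; ring. Qed.

Lemma zpoint_z : zpoint iz = 0.
Proof. by rewrite /zpoint big1 // => a _; rewrite !coord_eqE !mul0r addr0. Qed.

Hypothesis cc : curve_constraints.

Lemma sq_rel0 a : sq_rel a = 0. Proof. by case: (cc.1 a). Qed.
Lemma mix_rel0 a : mix_rel a = 0. Proof. by case: (cc.1 a). Qed.
Lemma prod_rel0 a : prod_rel a = 0. Proof. by case: (cc.1 a). Qed.

Lemma dot_AB : \sum_(a < 3) A a * B a = 0.
Proof.
apply/eqP; rewrite -sqrf_eq0; apply/eqP.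
transitivity (\sum_(a < 3) (B a ^+ 2 * sq_rel a + 2 * B a * B (nx a) * prod_rel a)).
  by rewrite !(sum_cyclic ord0) /sq_rel /prod_rel !nx3; ring.
by rewrite big1 // => a _; rewrite sq_rel0 prod_rel0; ring.
Qed.

Lemma C_at_zpoint : C_at zpoint = 0.
Proof.
rewrite /C_at (eq_bigr (fun a => 2 * (A a * B a))) => [|a _].
  by rewrite -mulr_sumr dot_AB mulr0.
by rewrite zpoint_S zpoint_T; ring.
Qed.

Lemma pencil_antisym i j y : pencil j i y = - pencil i j y.
Proof.
have ewedgeC a b : ewedge a b j i y = - ewedge a b i j y.
  by rewrite /ewedge opprB [(j == a) && _]andbC [(j == b) && _]andbC.
by rewrite /pencil /P0 /Palpha /bv_add /bv_scale !(sum_cyclic ord0) !ewedgeC; ring.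
Qed.

Lemma wedge3_pencil_zpoint i j k : i != iz -> j != iz -> k != iz ->
  wedge3 zpoint (fun i j => pencil i j zpoint) i j k = 0.
Proof.
move: i j k; apply: wedge3_cyclic_eq0 => [i j|a|a|a k|a k]; first exact: pencil_antisym.
- transitivity (\sum_(b < 3) w b * A b ^+ 2); last exact: cc.2.
  by rewrite /wedge3 (sum_cyclic a); pencil_simpl a; rewrite !zpoint_S !zpoint_T; ring.
- transitivity (\sum_(b < 3) A b * B b); last exact: dot_AB.
  by rewrite /wedge3 (sum_cyclic a); pencil_simpl a; rewrite !zpoint_S !zpoint_T; ring.
- rewrite /wedge3; case: (cycP a k); pencil_simpl a; rewrite !zpoint_S !zpoint_T.
  + transitivity (mix_rel (nx (nx a))); last exact: mix_rel0.
    by rewrite /mix_rel nx3; ring.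
  + transitivity (- mix_rel (nx a)); last by rewrite mix_rel0 oppr0.
    by rewrite /mix_rel; ring.
  + transitivity (w (nx (nx a)) * \sum_(b < 3) A b * B b); last by rewrite dot_AB mulr0.
    by rewrite (sum_cyclic a); ring.
- rewrite /wedge3; case: (cycP a k); pencil_simpl a; rewrite !zpoint_S !zpoint_T.
  + transitivity (prod_rel (nx (nx a))); last exact: prod_rel0.
    by rewrite /prod_rel nx3; ring.
  + transitivity (prod_rel (nx a)); last exact: prod_rel0.
    by rewrite /prod_rel nx3; ring.
  + transitivity (sq_rel (nx (nx a))); last exact: sq_rel0.
    by rewrite /sq_rel !nx3; ring.
Qed.

Lemma ham_parallel y : C_at y = 0 -> parallel zpoint (fun i => ham i y).
Proof.
move=> Cy; apply: parallel_cyclic => [a|a|a k]; apply/subr0_eq.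
- rewrite !zpoint_S !ham_S !nx3.
  transitivity (y (iS (nx a)) * mix_rel (nx a) - y (iS a) * mix_rel (nx (nx a))
    - y (iT (nx (nx a))) * \sum_(b < 3) w b * A b ^+ 2
    - w (nx (nx a)) * y (iS (nx (nx a))) * \sum_(b < 3) A b * B b
    + w (nx (nx a)) * A (nx (nx a)) * C_at y).
    by rewrite /mix_rel /C_at !(sum_cyclic a) ?nx3; ring.
  by rewrite !mix_rel0 cc.2 dot_AB Cy; ring.
- rewrite !zpoint_T !ham_T !nx3.
  transitivity (- y (iT (nx (nx a))) * sq_rel (nx (nx a))
    - y (iT (nx a)) * prod_rel (nx a) - y (iT a) * prod_rel (nx (nx a))
    - y (iS (nx (nx a))) * \sum_(b < 3) A b * B b + A (nx (nx a)) * C_at y).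
    by rewrite /sq_rel /prod_rel /C_at !(sum_cyclic a) ?nx3; ring.
  by rewrite !sq_rel0 !prod_rel0 dot_AB Cy; ring.
- rewrite zpoint_S zpoint_T ham_S ham_T; case: (cycP a k); rewrite ?nx3.
  + transitivity (y (iT (nx (nx a))) * mix_rel a + y (iT (nx a)) * mix_rel (nx (nx a))
      + y (iS (nx (nx a))) * prod_rel a - y (iS (nx a)) * prod_rel (nx (nx a))).
      by rewrite /mix_rel /prod_rel ?nx3; ring.
    by rewrite !mix_rel0 !prod_rel0; ring.
  + transitivity (- y (iS (nx (nx a))) * sq_rel a - y (iT (nx a)) * mix_rel (nx a)
      + y (iS a) * prod_rel (nx (nx a))
      - w (nx a) * y (iT (nx (nx a))) * \sum_(b < 3) A b * B b
      + w (nx a) * B (nx (nx a)) * C_at y).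
      by rewrite /sq_rel /mix_rel /prod_rel /C_at !(sum_cyclic a) ?nx3; ring.
    by rewrite sq_rel0 mix_rel0 prod_rel0 dot_AB Cy; ring.
  + transitivity (y (iS (nx a)) * sq_rel a - y (iT (nx (nx a))) * mix_rel (nx a)
      - y (iS a) * prod_rel a + w (nx (nx a)) * y (iT (nx a)) * \sum_(b < 3) A b * B b
      - w (nx (nx a)) * B (nx a) * C_at y).
      by rewrite /sq_rel /mix_rel /prod_rel /C_at !(sum_cyclic a) ?nx3; ring.
    by rewrite sq_rel0 mix_rel0 prod_rel0 dot_AB Cy; ring.
Qed.

End Pencil.

Section Derivatives.
Variable K : numFieldType.

Lemma is_derive_affine (a b : K) : is_derive (0 : K) (1 : K) (fun t : K => a + t * b) b.
Proof.
have D := is_deriveD (is_derive_cst a (0 : K) (1 : K))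
  (is_deriveM (is_derive_id (0 : K) (1 : K)) (is_derive_cst b (0 : K) (1 : K))).
rewrite (_ : (fun t => a + t * b) = cst a + id * cst b) //.
by apply: (is_derive_eq D); rewrite /= scaler0 !add0r /GRing.scale /= mulr1.
Qed.

Lemma derive1_ratio (a b c d : K) : c != 0 ->
  derive1 (fun t : K => (a + t * b) / (c + t * d)) 0 = (b * c - a * d) / c ^+ 2.
Proof.
move=> c0.
have g0 : (fun t : K => c + t * d) 0 != 0 by rewrite /= mul0r addr0.
have Dinv : is_derive (0 : K) (1 : K) (fun t => (c + t * d)^-1) (- c ^- 2 *: d).
  apply: DeriveDef; first by apply: derivableV => //; exact: ex_derive (is_derive_affine c d).
  by rewrite deriveV // (@derive_val _ _ _ _ _ _ _ (is_derive_affine c d)) mul0r addr0.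
have D := is_deriveM (is_derive_affine a b) Dinv.
rewrite derive1E (_ : (fun t => _ / _) = (fun t => a + t * b) * (fun t => (c + t * d)^-1)) //.
by rewrite derive_val /= /GRing.scale /= !mul0r !addr0; field.
Qed.

Lemma is_derive_translate (f : K -> K) (z : K) : derivable f z 1 ->
  is_derive (0 : K) (1 : K) (fun t => f (z + t)) ('D_1 f z).
Proof.
move=> df.
have E : (fun h : K => h^-1 *: ((fun t => f (z + t)) (h *: 1 + 0) - (fun t => f (z + t)) 0))
   = (fun h : K => h^-1 *: (f (h *: 1 + z) - f z)).
  by apply/funext => h /=; rewrite !addr0 [z + _]addrC.
by apply: DeriveDef; rewrite /derivable /derive E.
Qed.

Lemma is_derive_translate_mulr (f : K -> K) (z c : K) : derivable f z 1 ->
  is_derive (0 : K) (1 : K) (fun t => f (z + t) * c) ('D_1 f z * c).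
Proof.
move=> df; have D := is_deriveM (is_derive_translate df) (is_derive_cst c (0 : K) (1 : K)).
by apply: (is_derive_eq D); rewrite /= /GRing.scale /= mulr0 add0r mulrC.
Qed.

End Derivatives.

Section Partials.
Variable K : numFieldType.
Implicit Types (x y X : pt K) (F G : pt K -> K).

Definition shift_coord x k t : pt K := fun l => if l == k then x l + t else x l.
Definition unit_pt k : pt K := fun l => (l == k)%:R.
Definition linear_fn G :=
  forall s y1 y2, G (fun l => s * y1 l + y2 l) = s * G y1 + G y2.

Lemma shift_coord_z x k t : k != iz -> shift_coord x k t iz = x iz.
Proof. by rewrite /shift_coord eq_sym => /negPf ->. Qed.

Lemma linear_fn_shift G x k t : linear_fn G ->
  G (shift_coord x k t) = G x + t * G (unit_pt k).
Proof.
move=> linG; rewrite [RHS]addrC -linG; congr G; apply/funext => l.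
by rewrite /shift_coord /unit_pt; case: (l == k); rewrite /= ?mulr1 ?mulr0 ?add0r // addrC.
Qed.

Lemma linear_fn_expand G X : linear_fn G -> \sum_(l < 7) X l * G (unit_pt l) = G X.
Proof.
move=> linG.
have G0 : G (fun _ => 0) = 0.
  have /= := linG 1 (fun _ => 0) (fun _ => 0); rewrite !mul1r addr0 => E.
  by apply: (@addrI _ (G (fun _ => 0))); rewrite addr0 -E.
have sum_seq (r : seq 'I_7) : \sum_(l <- r) X l * G (unit_pt l) =
    G (fun m => \sum_(l <- r) X l * unit_pt l m).
  elim: r => [|a r IH]; first by rewrite big_nil -G0; congr G; apply/funext => m; rewrite big_nil.
  rewrite big_cons IH -linG; congr G; apply/funext => m; by rewrite big_cons.
rewrite sum_seq; congr G; apply/funext => m.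
rewrite (bigD1 m) //= /unit_pt eqxx mulr1 big1 ?addr0 // => l.
by rewrite eq_sym => /negPf ->; rewrite mulr0.
Qed.

Lemma pd_affine k F x a b : (forall t, F (shift_coord x k t) = a + t * b) ->
  pd k F x = b.
Proof.
move=> HF; rewrite /pd (_ : (fun t => _) = fun t => a + t * b).
  by rewrite derive1E (@derive_val _ _ _ _ _ _ _ (is_derive_affine a b)).
by apply/funext => t; rewrite -HF.
Qed.

Lemma pd_linear k F G x : linear_fn G ->
  (forall t, F (shift_coord x k t) = G (shift_coord x k t)) -> pd k F x = G (unit_pt k).
Proof. by move=> linG HF; apply: (pd_affine (a := G x)) => t; rewrite HF linear_fn_shift. Qed.

Lemma pd_ratio k F G1 G2 x : linear_fn G1 -> linear_fn G2 -> G2 x != 0 ->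
  (forall t, F (shift_coord x k t) = G1 (shift_coord x k t) / G2 (shift_coord x k t)) ->
  pd k F x = (G1 (unit_pt k) * G2 x - G1 x * G2 (unit_pt k)) / G2 x ^+ 2.
Proof.
move=> lin1 lin2 nz HF; rewrite /pd (_ : (fun t => _) =
  fun t => (G1 x + t * G1 (unit_pt k)) / (G2 x + t * G2 (unit_pt k))).
  by rewrite derive1_ratio.
by apply/funext => t; rewrite -!linear_fn_shift // -HF.
Qed.

Lemma sum_pd_lift (W : 'I_7 -> 'I_7 -> pt K -> K) (h : 'I_7 -> pt K -> K) c F x X i j :
  (forall i j, linear_fn (W i j)) -> (forall i, linear_fn (h i)) -> linear_fn c ->
  c x != 0 -> X iz = 0 ->
  (forall k t, k != iz -> let y := shift_coord x k t in
     F y = lift_at (fun i j => W i j y) (fun i => h i y / c y) i j) ->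
  \sum_(k < 7) X k * pd k F x =
    lift_at (fun i j => W i j X) (fun i => (h i X * c x - h i x * c X) / c x ^+ 2) i j.
Proof.
move=> linW linh linc cx0 Xz HF.
pose G y := lift_at (fun i j => W i j y) (fun i => (h i y * c x - h i x * c y) / c x ^+ 2) i j.
have linG : linear_fn G.
  by move=> s y1 y2; rewrite /G /lift_at; case: (i == iz); case: (j == iz);
    rewrite ?linW ?linh ?linc; ring.
rewrite -[RHS]/(G X) -(linear_fn_expand X linG); apply: eq_bigr => k _.
have [->|kz] := eqVneq k iz; first by rewrite Xz !mul0r.
congr (_ * _); move: (HF k) => /(_ _ kz) {}HF; rewrite /G /lift_at in HF *.
case: (i == iz) HF; case: (j == iz) => HF.
- by apply: (pd_affine (a := 0)) => t; rewrite HF; ring.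
- exact: pd_ratio.
- have linNh : linear_fn (fun y => - h i y) by move=> s y1 y2; rewrite linh; ring.
  rewrite (pd_ratio linNh linc cx0) => [|t]; first by ring.
  by rewrite HF mulNr.
- exact: pd_linear.
Qed.

End Partials.
Arguments unit_pt {K} k.

Section Linearity.
Variables (K : numFieldType) (w A B : 'I_3 -> K).

Lemma linear_pencil i j : linear_fn (pencil w i j).
Proof.
by move=> s y1 y2; rewrite /pencil /P0 /Palpha /bv_add /bv_scale !(sum_cyclic ord0); ring.
Qed.

Lemma linear_ham i : linear_fn (ham w A B i).
Proof. by move=> s y1 y2; rewrite /ham !(sum_cyclic ord0) !linear_pencil; ring. Qed.

Lemma linear_C_at : linear_fn (C_at A B).
Proof. by move=> s y1 y2; rewrite /C_at !(sum_cyclic ord0); ring. Qed.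

Lemma C_at_unit_pt a :
  (C_at A B (unit_pt (iS a)) = B a) * (C_at A B (unit_pt (iT a)) = A a).
Proof. by split; rewrite /C_at /unit_pt (sum_cyclic a) !coord_eqE ?nx_eqF ?eqxx /=; ring. Qed.

End Linearity.

Section LiftedPencil.
Variables (K : numFieldType) (jc : 'I_3 -> K) (A B : 'I_3 -> K -> K) (v : K -> K).
Variable U : set K.
Hypothesis dA : forall a z, U z -> derivable (A a) z 1.
Hypothesis dB : forall a z, U z -> derivable (B a) z 1.

Let wz z a := v z + jc a.
Let Az z a := A a z.
Let Bz z a := B a z.
Let hamz z := ham (wz z) (Az z) (Bz z).
Let dCat z := C_at (fun a => 'D_1 (A a) z) (fun a => 'D_1 (B a) z).
Let dCz (y : pt K) := dCat (y iz) y.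
Let Zpt (y : pt K) := zpoint (Az (y iz)) (Bz (y iz)).
Let Rhat := bv_add (liftbv (C2hat A B) (Qbv jc))
  (bv_scale (fun y => v (y iz)) (liftbv (C2hat A B) (@Pbv K))).

Lemma Qbv_Pbv_pencil z i j y : Qbv jc i j y + v z * Pbv i j y = pencil (wz z) i j y.
Proof.
rewrite /Qbv /Pbv /pencil mulr_sumr -addrA -big_split /=; congr (_ + _).
by apply: eq_bigr => a _; rewrite /wz; ring.
Qed.

Lemma pd_C2hat y k : k != iz ->
  pd k (C2hat A B) y = C_at (Az (y iz)) (Bz (y iz)) (unit_pt k).
Proof.
move=> kz; apply: pd_linear => [|t]; first exact: linear_C_at.
by rewrite /C2hat shift_coord_z.
Qed.

Lemma pd_z_C2hat y : U (y iz) -> pd iz (C2hat A B) y = dCz y.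
Proof.
move=> Uy; pose f a t := B a (y iz + t) * y (iS a) + A a (y iz + t) * y (iT a).
have D a : is_derive (0 : K) (1 : K) (f a)
    ('D_1 (B a) (y iz) * y (iS a) + 'D_1 (A a) (y iz) * y (iT a)).
  rewrite (_ : f a = (fun t => B a (y iz + t) * y (iS a))
                   + (fun t => A a (y iz + t) * y (iT a))) //.
  exact: is_deriveD (is_derive_translate_mulr _ (@dB a _ Uy))
                    (is_derive_translate_mulr _ (@dA a _ Uy)).
rewrite /pd (_ : (fun t => _) = \sum_(a < 3) f a).
  by rewrite derive1E (@derive_val _ _ _ _ _ _ _ (is_derive_sum D)).
apply/funext => t; rewrite fct_sumE /C2hat; apply: eq_bigr => a _.
by rewrite /f eqxx !coord_eqE.
Qed.

Lemma Rhat_lift y : U (y iz) -> forall i j,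
  Rhat i j y = lift_at (fun i j => pencil (wz (y iz)) i j y)
    (fun i => hamz (y iz) i y / dCz y) i j.
Proof.
move=> Uy i j.
have hamE m : hamz (y iz) m y =
    \sum_(k < 7 | k != iz) pd k (C2hat A B) y * Qbv jc m k y
    + v (y iz) * \sum_(k < 7 | k != iz) pd k (C2hat A B) y * Pbv m k y.
  rewrite mulr_sumr -big_split sum_coords_nz /hamz /ham; apply: eq_bigr => a _ /=.
  by rewrite !pd_C2hat ?coord_eqE // !C_at_unit_pt -!Qbv_Pbv_pencil; ring.
rewrite /Rhat /bv_add /bv_scale /liftbv /liftcol /lift_at pd_z_C2hat // !hamE.
by case: (i == iz); case: (j == iz); rewrite ?Qbv_Pbv_pencil; ring.
Qed.

Lemma pd_Zhat l i x : l != iz -> pd l (Zhat A B i) x = 0.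
Proof.
move=> lz; apply: (pd_affine (a := Zhat A B i x)) => t.
by rewrite /Zhat shift_coord_z // mulr0 addr0.
Qed.

Lemma pd_z_Zhat_z x : pd iz (Zhat A B iz) x = 0.
Proof. by apply: (pd_affine (a := 0)) => t; rewrite [LHS]zpoint_z; ring. Qed.

Lemma lie_Rhat x i j : U (x iz) -> dCz x != 0 ->
  lie (Zhat A B) Rhat i j x =
    lift_at (fun i j => pencil (wz (x iz)) i j (Zpt x))
      (fun i => (hamz (x iz) i (Zpt x) * dCz x - hamz (x iz) i x * dCat (x iz) (Zpt x))
                / dCz x ^+ 2) i j
    - Rhat iz j x * pd iz (Zhat A B i) x - Rhat i iz x * pd iz (Zhat A B j) x.
Proof.
move=> Ux cx0.
have single_term (F : 'I_7 -> K) m :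
    \sum_(l < 7) F l * pd l (Zhat A B m) x = F iz * pd iz (Zhat A B m) x.
  by rewrite (bigD1 iz) //= big1 ?addr0 // => l lz; rewrite pd_Zhat // mulr0.
rewrite /lie !single_term (sum_pd_lift (i := i) (j := j) (X := Zpt x)
  (W := fun i j y => pencil (wz (x iz)) i j y) (h := hamz (x iz)) (c := dCat (x iz))) //.
- exact: linear_pencil.
- exact: linear_ham.
- exact: linear_C_at.
- exact: zpoint_z.
move=> k t kz /=; rewrite Rhat_lift; last by rewrite shift_coord_z.
by rewrite /dCz shift_coord_z.
Qed.

Lemma wedge_Zhat_dR_eq0 x :
  curve_constraints (wz (x iz)) (Az (x iz)) (Bz (x iz)) -> U (x iz) ->
  C2hat A B x = 0 -> pd iz (C2hat A B) x != 0 ->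
  forall i j k, wedge12 (Zhat A B) (dR Rhat (Zhat A B)) i j k x = 0.
Proof.
move=> cc Ux Cx0 cx0 i j k; rewrite pd_z_C2hat // in cx0.
have := wedge3_lift_eq0 (X := fun l => Zhat A B l x) (dX := fun l => pd iz (Zhat A B l) x)
  (hx := fun l => hamz (x iz) l x) (hX := fun l => hamz (x iz) l (Zpt x))
  (W := fun i j => pencil (wz (x iz)) i j (Zpt x)) (fun i j => pencil (wz (x iz)) i j x)
  (dCz x) (dCat (x iz) (Zpt x)) (zpoint_z _ _) (pd_z_Zhat_z x)
  (wedge3_pencil_zpoint cc) (ham_parallel cc Cx0) (ham_parallel cc (C_at_zpoint cc)) i j k.
move/(congr1 -%R); rewrite oppr0; apply: etrans.
by rewrite /wedge12 /dR !lie_Rhat // !Rhat_lift // /wedge3; ring.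
Qed.

End LiftedPencil.

Theorem lemma7 (K : numFieldType) (jc : 'I_3 -> K) (A B : 'I_3 -> K -> K)
  (v : K -> K) (U : set K) :
  injective jc ->
  open U ->
  (forall a z, U z -> derivable (A a) z 1) ->
  (forall a z, U z -> derivable (B a) z 1) ->
  (forall a z, U z ->
     let b := nx a in let c := nx (nx a) in
     [/\ A a z ^+ 2 + (v z + jc b) * B c z ^+ 2 + (v z + jc c) * B b z ^+ 2 = 0,
         (v z + jc a) * A a z * B b z - (v z + jc b) * A b z * B a z = 0 &
         A a z * A b z - (v z + jc c) * B a z * B b z = 0]) ->
  (forall z, U z -> \sum_(a < 3) (v z + jc a) * A a z ^+ 2 = 0) ->
  forall x : pt K, U (x iz) ->
    C2hat A B x = 0 ->
    pd iz (C2hat A B) x != 0 ->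
    forall i j k : 'I_7,
      wedge12 (Zhat A B)
        (dR (bv_add (liftbv (C2hat A B) (Qbv jc))
                    (bv_scale (fun y => v (y iz)) (liftbv (C2hat A B) (@Pbv K))))
            (Zhat A B)) i j k x = 0.
Proof.
move=> _ _ dA dB rels wsum x Ux.
apply: (wedge_Zhat_dR_eq0 dA dB) => //.
by split=> [a|]; [exact: rels a _ Ux | exact: wsum _ Ux].
Qed.
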